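(* Let $N=[1,n]=\{1,\dots,n\}$ ($n\ge0$). Then \[ |G_2(N)/{\cong}|=\sum_{[M]\in\mathcal{P}(N)/{\cong}}|\overline{L}_2(|M|)/\mathcal{S}_2| + \sum_{[M]\in\mathcal{P}(N)/{\cong},\ M\notin\mathrm{Sym}}\big(|\overline{t}^{\langle 1\rangle}_{|M|}|+|\overline{t}^{\langle c\rangle}_{|M|}|\big). \]
   Context: Binary CAs: for finite $M=\{j_1<\dots<j_m\}\subset\mathbb{Z}$ and $f:\{0,1\}^m\to\{0,1\}$, $\Phi^M_f(x)_i=f(x_{i+j_1}\dots x_{i+j_m})$ on $\{0,1\}^{\mathbb{Z}}$; $G_2(N)=\{\Phi^N_f\mid f:\{0,1\}^{|N|}\to\{0,1\}\}$. $\overline{L}_2(m)$ is the set of irreducible $f:\{0,1\}^m\to\{0,1\}$ (depending on every argument). On rules: $c$ swaps $0,1$ letterwise, $r$ reverses words, $\hat cf(w)=c f(cw)$, $\hat rf(w)=f(rw)$; $\mathcal{S}_2=\{1,r,c,rc\}$ acts on $\overline{L}_2(m)$, $\mathrm{stab}(f)=\{\alpha\mid\hat\alpha f=f\}$, and $\overline{t}^U_m=\{[f]\in\overline{L}_2(m)/\mathcal{S}_2\mid\mathrm{stab}(f)=U\}$ for $U\le\mathcal{S}_2$. On global maps: $\sigma\Phi=\sigma\circ\Phi$ with $(\sigma x)_i=x_{i+1}$, $\hat c\Phi(x)=c\Phi(cx)$ (cellwise), $\hat r\Phi(x)=r\Phi(rx)$ with $(rx)_i=x_{-i}$; $\mathcal{T}_2$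 is the group generated by these, and $\Phi\cong\Psi$ iff $\Psi=\tau\Phi$ for some $\tau\in\mathcal{T}_2$; $G_2(N)/{\cong}$ is the set of classes of this relation restricted to $G_2(N)$. For sets of integers, $M\cong M'$ iff $M'=j+M$ or $M'=j-M$ for some $j\in\mathbb{Z}$ (where $j\pm M=\{j\pm i\mid i\in M\}$); $\mathcal{P}(N)/{\cong}$ is the set of classes of this relation restricted to subsets of $N$. $\mathrm{Sym}$ is the set of reflection-symmetrical sets, i.e. $M$ with $M=j-M$ for some $j\in\mathbb{Z}$. *)

From HB Require Import structures.
From mathcomp Require Import all_boot all_order all_algebra.
From mathcomp Require Import boolp.
Set Implicit Arguments. Unset Strict Implicit. Unset Printing Implicit Defensive.
Import Order.TTheory GRing.Theory Num.Theory.
Local Open Scope ring_scope.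

Definition config := int -> bool.
Definition gmap := config -> config.

Definition word (m : nat) := {ffun 'I_m -> bool}.
Definition rule (m : nat) := {ffun word m -> bool}.

Definition PhiN (n : nat) (f : rule n) : gmap :=
  fun x i => f [ffun j : 'I_n => x (i + (j.+1)%:Z)].

(* generators sigma, sigma^{-1}, c^, r^ (the latter two are involutions) *)
Inductive gen := Gsigma | Gsigma_inv | Gc | Gr.

Definition act_gen (g : gen) (Phi : gmap) : gmap :=
  match g with
  | Gsigma => fun x i => Phi x (i + 1)
  | Gsigma_inv => fun x i => Phi x (i - 1)
  | Gc => fun x i => ~~ Phi (fun k => ~~ x k) i
  | Gr => fun x i => Phi (fun k => x (- k)) (- i)
  end.

Definition act_T2 (tau : seq gen) (Phi : gmap) : gmap := foldr act_gen Phi tau.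

Definition gcong (Phi Psi : gmap) : Prop := exists tau : seq gen, Psi = act_T2 tau Phi.

(* |G_2(N)/~=| for N = [1,n]: the classes of G_2(N), each identified with the
   set of rules f whose global map Phi^N_f lies in it *)
Definition num_G2_classes (n : nat) : nat :=
  #|[set [set g : rule n | `[< gcong (PhiN f) (PhiN g) >]] | f : rule n]|.

(* M : {set 'I_n} represents the subset {k+1 | k in M} of Z *)
Definition toZ (n : nat) (M : {set 'I_n}) (z : int) : bool :=
  [exists k in M, z == (k.+1)%:Z].

Definition scong (n : nat) (M M' : {set 'I_n}) : Prop :=
  exists j : int, (forall z, toZ M' z = toZ M (z - j))
               \/ (forall z, toZ M' z = toZ M (j - z)).

Definition Sym (n : nat) (M : {set 'I_n}) : Prop :=
  exists j : int, forall z, toZ M z = toZ M (j - z).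

Definition Pclasses (n : nat) : {set {set {set 'I_n}}} :=
  [set [set M' | `[< scong M M' >]] | M : {set 'I_n}].

Definition rep (n : nat) (C : {set {set 'I_n}}) : {set 'I_n} :=
  odflt set0 [pick M in C].

Definition flip (m : nat) (w : word m) (i : 'I_m) : word m :=
  [ffun j => if j == i then ~~ w j else w j].

Definition irreducible (m : nat) (f : rule m) : bool :=
  [forall i : 'I_m, exists w : word m, f w != f (flip w i)].

Definition cw (m : nat) (w : word m) : word m := [ffun j => ~~ w j].
Definition rw (m : nat) (w : word m) : word m := [ffun j => w (rev_ord j)].

Definition chat (m : nat) (f : rule m) : rule m := [ffun w => ~~ f (cw w)].
Definition rhat (m : nat) (f : rule m) : rule m := [ffun w => f (rw w)].

(* S_2 encoded as bool * bool: (br, bc) stands for r^br c^bc;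
   (false,false) = 1, (true,false) = r, (false,true) = c, (true,true) = rc *)
Definition S2 := (bool * bool)%type.
Definition actS2 (m : nat) (a : S2) (f : rule m) : rule m :=
  let f1 := (if a.2 then chat f else f) in if a.1 then rhat f1 else f1.

Definition orbitS2 (m : nat) (f : rule m) : {set rule m} :=
  [set g | [exists a : S2, g == actS2 a f]].

Definition stab (m : nat) (f : rule m) : {set S2} := [set a | actS2 a f == f].

Definition num_Lbar_classes (m : nat) : nat :=
  #|[set orbitS2 f | f in [pred f : rule m | irreducible f]]|.

Definition tbar (U : {set S2}) (m : nat) : nat :=
  #|[set orbitS2 f | f in [pred f : rule m | irreducible f && (stab f == U)]]|.

Definition U1 : {set S2} := [set (false, false)].
Definition Uc : {set S2} := [set (false, false); (false, true)].

(* Every element of T_2 acts on a global map as sigma^k c^a r^b, so Phi^N_f and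
   Phi^N_g are congruent exactly when g(x_1 .. x_n) = a + f(a + x) with x read
   from cell k onwards, leftwards if b. Such a relation moves the essential
   arguments of f (those it depends on) by z |-> z - k or z |-> k - z, so the
   classes of G_2(N) split along the classes [M] of P(N), M being the set of
   essential arguments. Every rule in the part of [M] is congruent to one whose
   essential set is exactly M, and those correspond to the irreducible rules on
   |M| letters. Two of these are congruent iff they are related by S_2 when M is
   reflection-symmetric, and only by <c> otherwise, since a translation fixing M
   is trivial. Finally an S_2-orbit splits into two <c>-orbits exactly when
   neither r nor rc stabilises f, i.e. when stab f is <1> or <c>. *)

From HB Require Import structures.
From mathcomp Require Import all_boot all_order all_algebra.
From mathcomp Require Import boolp.
From mathcomp Require Import zify ring.
Set Implicit Arguments. Unset Strict Implicit. Unset Printing Implicit Defensive.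
Import Order.TTheory GRing.Theory Num.Theory.
Local Open Scope ring_scope.

(** * The group T_2 *)

(* The action of sigma^k c^a r^b; by act_T2E every element of T_2 acts this way. *)
Definition T2nf (p : int * bool * bool) (Phi : gmap) : gmap :=
  let: (k, a, b) := p in
  fun x i => a (+) Phi (fun z => a (+) x (if b then - z else z))
                      (if b then - (i + k) else i + k).

Definition T2step (g : gen) (p : int * bool * bool) : int * bool * bool :=
  let: (k, a, b) := p in
  match g with
  | Gsigma => (k + 1, a, b)
  | Gsigma_inv => (k - 1, a, b)
  | Gc => (k, ~~ a, b)
  | Gr => (- k, a, ~~ b)
  end.

Local Notation T2id := (0, false, false).

Lemma T2nf_id Phi : T2nf T2id Phi = Phi.
Proof. by apply: funext => x; apply: funext => i; rewrite /= addr0. Qed.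

Lemma act_gen_T2nf g p Phi : act_gen g (T2nf p Phi) = T2nf (T2step g p) Phi.
Proof.
case: p => [[k a] b]; apply: funext => x; apply: funext => i.
case: g; rewrite /=.
- by case: b; congr (_ (+) Phi _ _); ring.
- by case: b; congr (_ (+) Phi _ _); ring.
- by rewrite -addNb; congr (~~ a (+) Phi _ _); apply: funext => z; rewrite addbN addNb.
- congr (a (+) Phi _ _); first by apply: funext => z; case: b; rewrite /= ?opprK.
  by case: b => /=; ring.
Qed.

Lemma act_T2E tau Phi : act_T2 tau Phi = T2nf (foldr T2step T2id tau) Phi.
Proof.
elim: tau => [|g tau IH]; first by rewrite T2nf_id.
by rewrite -act_gen_T2nf -IH.
Qed.

Lemma foldr_T2step_shift (m : nat) a b :
  foldr T2step (0, a, b) (nseq m Gsigma) = (m%:Z, a, b) /\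
  foldr T2step (0, a, b) (nseq m Gsigma_inv) = (- m%:Z, a, b).
Proof.
elim: m => [|m [IHp IHn]] //=; rewrite IHp IHn -addn1 PoszD.
by rewrite opprD.
Qed.

Lemma T2step_surj p : exists tau, foldr T2step T2id tau = p.
Proof.
case: p => [[k a] b].
have Hrc : foldr T2step T2id
    ((if a then [:: Gc] else [::]) ++ (if b then [:: Gr] else [::])) = (0, a, b).
  by rewrite foldr_cat; case: a; case: b; rewrite /= ?oppr0.
set refl_compl := _ ++ _ in Hrc.
have [m [-> | ->]] : exists m : nat, k = m%:Z \/ k = - m%:Z.
  by case: k => m; [exists m; left | exists m.+1; right; rewrite NegzE].
- exists (nseq m Gsigma ++ refl_compl).
  by rewrite foldr_cat Hrc; case: (foldr_T2step_shift m a b).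
- exists (nseq m Gsigma_inv ++ refl_compl).
  by rewrite foldr_cat Hrc; case: (foldr_T2step_shift m a b).
Qed.

Lemma gcongE Phi Psi : gcong Phi Psi <-> exists p, Psi = T2nf p Phi.
Proof.
split=> [[tau ->] | [p ->]]; first by exists (foldr T2step T2id tau); rewrite act_T2E.
by have [tau <-] := T2step_surj p; exists tau; rewrite act_T2E.
Qed.

Definition gen_inv (g : gen) : gen :=
  match g with Gsigma => Gsigma_inv | Gsigma_inv => Gsigma | Gc => Gc | Gr => Gr end.

Lemma act_gen_invK g : cancel (act_gen g) (act_gen (gen_inv g)).
Proof.
move=> Phi; apply: funext => x; apply: funext => i; case: g => /=.
- by rewrite subrK.
- by rewrite addrK.
- by rewrite negbK; congr (Phi _ _); apply: funext => z; rewrite negbK.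
- by rewrite opprK; congr (Phi _ _); apply: funext => z; rewrite opprK.
Qed.

Lemma act_T2_cat t1 t2 Phi : act_T2 (t1 ++ t2) Phi = act_T2 t1 (act_T2 t2 Phi).
Proof. by rewrite /act_T2 foldr_cat. Qed.

Lemma act_T2_invK tau : cancel (act_T2 tau) (act_T2 (rev (map gen_inv tau))).
Proof.
elim: tau => [//|g tau IH] Phi.
by rewrite /= rev_cons -cats1 act_T2_cat /= act_gen_invK IH.
Qed.

Lemma gcong_equiv : equivalence_rel (fun Phi Psi => `[< gcong Phi Psi >]).
Proof.
move=> Phi Psi Chi; split; first by apply/asboolP; exists [::].
move=> /asboolP [tau ->]; apply/asboolP/asboolP => [[t ->] | [t ->]].
  by exists (t ++ rev (map gen_inv tau)); rewrite act_T2_cat act_T2_invK.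
by exists (t ++ tau); rewrite act_T2_cat.
Qed.

Section Windows.
Variable n : nat.
Implicit Types (f g : rule n) (x : config).

Definition cell (k : int) (b : bool) (j : 'I_n) : int :=
  if b then k - (j.+1 : nat)%:Z else k + (j.+1 : nat)%:Z.

Definition window (p : 'I_n -> int) (a : bool) x : word n := [ffun j => a (+) x (p j)].

Definition shiftc x (i : int) : config := fun z => x (z + i).

Lemma cell_inj k b : injective (cell k b).
Proof. by move=> j j'; rewrite /cell => E; apply: val_inj; case: b E => /= E; lia. Qed.

Lemma T2nf_PhiN k a b f x i :
  T2nf (k, a, b) (PhiN f) x i = a (+) f (window (cell (i + k) b) a x).
Proof.
congr (_ (+) f _); apply/ffunP => j; rewrite !ffunE /cell.
by case: b => //=; rewrite opprD opprK addrC.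
Qed.

Lemma window_shift k b a x i :
  window (cell (i + k) b) a x = window (cell k b) a (shiftc x i).
Proof.
by apply/ffunP => j; rewrite !ffunE /shiftc /cell; case: b; congr (_ (+) x _); ring.
Qed.

Definition local_equiv (k : int) (a b : bool) f g :=
  forall x, g (window (cell 0 false) false x) = a (+) f (window (cell k b) a x).

Lemma gcong_PhiN f g :
  gcong (PhiN f) (PhiN g) <-> exists k a b, local_equiv k a b f g.
Proof.
rewrite gcongE; split=> [[[[k a] b] Hg] | [k [a [b Hfg]]]].
  exists k, a, b => x.
  have E : PhiN g x 0 = T2nf (k, a, b) (PhiN f) x 0 by rewrite Hg.
  by rewrite T2nf_PhiN add0r in E.
exists (k, a, b); apply: funext => x; apply: funext => i.
by rewrite T2nf_PhiN window_shift -Hfg -window_shift addr0.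
Qed.

End Windows.

(** * Essential arguments *)

Section Essential.
Variable m : nat.
Implicit Types (f h : rule m) (w : word m).

Definition ess f : {set 'I_m} := [set i | [exists w, f w != f (flip w i)]].

Lemma irreducibleE f : irreducible f = (ess f == setT).
Proof.
apply/forallP/eqP => [Hf | Hf i]; first by apply/setP => i; rewrite !inE Hf.
by have := in_setT i; rewrite -Hf inE.
Qed.

Lemma eq_on_ess f w w' : {in ess f, w =1 w'} -> f w = f w'.
Proof.
move Hd : #|[set j | w j != w' j]| => d.
elim: d w Hd => [|d IHd] w Hd eqw.
  suff -> : w = w' by [].
  apply/ffunP => j; apply/eqP.
  by have := in_set0 j; rewrite -(cards0_eq Hd) inE => /negbFE.
have /card_gt0P [j] : (0 < #|[set j | w j != w' j]|)%N by rewrite Hd.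
rewrite inE => neq_j.
have ess'j : j \notin ess f by apply: contra neq_j => /eqw ->.
have -> : f w = f (flip w j).
  by move: ess'j; rewrite inE => /existsPn /(_ w) /negbNE /eqP.
apply: IHd => [|i Hi]; last first.
  by rewrite ffunE; case: eqP => [Eij | _]; [rewrite -Eij Hi in ess'j | apply: eqw].
have := cardsD1 j [set j | w j != w' j]; rewrite Hd inE neq_j add1n => -[->].
apply: eq_card => i; rewrite !inE ffunE; case: (eqVneq i j) => [-> | //].
by move: neq_j; case: (w j); case: (w' j).
Qed.

End Essential.

Definition cflip (x : config) (z : int) : config :=
  fun y => if y == z then ~~ x y else x y.

Definition depends (F : config -> bool) (z : int) : Prop :=
  exists x, F x != F (cflip x z).

Lemma depends_window m (p : 'I_m -> int) (p_inj : injective p) a (h : rule m) z :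
  depends (fun x => h (window p a x)) z <-> exists2 j, p j = z & j \in ess h.
Proof.
split=> [[x Hx] | [j <- /[!inE] /existsP [w Hw]]].
  have [j /eqP Ej | Hno] := pickP (fun j => p j == z); last first.
    suff E : window p a (cflip x z) = window p a x by rewrite E eqxx in Hx.
    by apply/ffunP => j; rewrite !ffunE /cflip Hno.
  exists j => //; rewrite inE; apply/existsP; exists (window p a x).
  suff <- : window p a (cflip x z) = flip (window p a x) j by [].
  apply/ffunP => i; rewrite !ffunE /cflip -Ej (inj_eq p_inj).
  by case: (i == j); rewrite ?addbN.
pose x y := [exists i, (p i == y) && (a (+) w i)].
have xE i : x (p i) = a (+) w i.
  apply/existsP/idP => [[i' /andP [/eqP /p_inj -> //]] | Hi].
  by exists i; rewrite eqxx.
exists x; have -> : window p a x = w by apply/ffunP => i; rewrite ffunE xE addKb.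
suff -> : window p a (cflip x (p j)) = flip w j by [].
apply/ffunP => i; rewrite !ffunE /cflip xE (inj_eq p_inj).
by case: (i == j); rewrite ?addbN addKb.
Qed.

Lemma toZ_cell n (M : {set 'I_n}) k b z :
  (exists2 j, cell k b j = z & j \in M) <-> toZ M (if b then k - z else z - k).
Proof.
split=> [[j <- Mj] | /existsP [j /andP [Mj /eqP Ej]]].
  by apply/existsP; exists j; rewrite Mj /= /cell; case: b; apply/eqP; ring.
by exists j => //; rewrite /cell; case: b Ej => Ej; lia.
Qed.

Lemma depends_cell n (h : rule n) k b a z :
  depends (fun x => h (window (cell k b) a x)) z <->
  toZ (ess h) (if b then k - z else z - k).
Proof. exact: iff_trans (depends_window (@cell_inj n k b) a h z) (toZ_cell _ _ _ _). Qed.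

Lemma depends_addb c F z : depends (fun x => c (+) F x) z <-> depends F z.
Proof. by split=> -[x Hx]; exists x; move: Hx; case: c; case: (F x); case: (F _). Qed.

Lemma local_equiv_ess n k a b (f g : rule n) :
  local_equiv k a b f g ->
  forall z, toZ (ess g) z = toZ (ess f) (if b then k - z else z - k).
Proof.
move=> /funext Hfg z; rewrite -[z in toZ _ z]subr0.
apply/idP/idP.
  by move/(depends_cell g 0 false false); rewrite Hfg => /depends_addb /depends_cell.
by move/(depends_cell f k b a)/(depends_addb a); rewrite -Hfg => /depends_cell.
Qed.

(** * Subsets of [1, n] up to translation and reflection *)

Section Positions.
Variable n : nat.
Implicit Types M : {set 'I_n}.

Lemma toZ_pos M (j : 'I_n) : toZ M (j.+1 : nat)%:Z = (j \in M).
Proof.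
apply/existsP/idP => [[j' /andP [Mj' /eqP E]] | Mj]; last by exists j; rewrite Mj eqxx.
by rewrite (_ : j = j') //; apply: val_inj => /=; lia.
Qed.

Lemma toZ_inj M M' : toZ M =1 toZ M' -> M = M'.
Proof. by move=> E; apply/setP => j; rewrite -!toZ_pos E. Qed.

Lemma scong_sym M M' : scong M M' -> scong M' M.
Proof.
case=> j [] Hj; first by exists (- j); left => z; rewrite Hj; congr toZ; ring.
by exists j; right => z; rewrite Hj; congr toZ; ring.
Qed.

Lemma scong_trans M M' M'' : scong M M' -> scong M' M'' -> scong M M''.
Proof.
case=> j [] Hj [j' [] Hj'].
- by exists (j + j'); left => z; rewrite Hj' Hj; congr toZ; ring.
- by exists (j' - j); right => z; rewrite Hj' Hj; congr toZ; ring.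
- by exists (j' + j); right => z; rewrite Hj' Hj; congr toZ; ring.
- by exists (j' - j); left => z; rewrite Hj' Hj; congr toZ; ring.
Qed.

Lemma scong_equiv : equivalence_rel (fun M M' : {set 'I_n} => `[< scong M M' >]).
Proof.
move=> M M' M''; split; first by apply/asboolP; exists 0; left => z; rewrite subr0.
move=> /asboolP HM; apply/asboolP/asboolP => HM'; last exact: scong_trans HM'.
exact: scong_trans (scong_sym HM) HM'.
Qed.

Definition positions M : seq int := [seq (j.+1 : nat)%:Z | j : 'I_n in M].

Lemma toZ_positions M z : toZ M z = (z \in positions M).
Proof.
rewrite /positions; apply/existsP/imageP => [[j /andP [Mj /eqP ->]] | [j Mj ->]].
  by exists j.
by exists j; rewrite Mj eqxx.
Qed.

Lemma positions_sorted M : sorted <%R (positions M).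
Proof.
have : sorted ltn (map val (enum 'I_n)) by rewrite val_enum_ord iota_ltn_sorted.
rewrite sorted_map enumT => /(sorted_filter (fun _ _ _ => @ltn_trans _ _ _) (mem M)).
rewrite /image_mem /enum_mem sorted_map; apply: sub_sorted => i j /=.
by rewrite ltz_nat ltnS.
Qed.

Lemma positions_translate M k (j : 'I_n) :
  (forall z, toZ M z = toZ M (z - k)) -> j \in M -> k = 0.
Proof.
move=> HM Mj.
have E : [seq z + k | z <- positions M] = positions M.
  apply: lt_sorted_eq; last 1 first.
  - move=> z; have := mem_map (addIr k) (positions M) (z - k).
    by rewrite subrK => ->; rewrite -!toZ_positions -HM.
  - by rewrite sorted_map; apply: sub_sorted (positions_sorted M) => x y /=; rewrite ltrD2r.
  - exact: positions_sorted.
have : (j.+1 : nat)%:Z \in positions M by rewrite -toZ_positions toZ_pos.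
by case: (positions M) E => [|x s] // [] E _; lia.
Qed.

Lemma positions_reflect M k :
  (forall z, toZ M z = toZ M (k - z)) ->
  forall i : 'I_#|M|,
    k - ((enum_val i).+1 : nat)%:Z = ((enum_val (rev_ord i)).+1 : nat)%:Z.
Proof.
move=> HM i.
have E : rev [seq k - z | z <- positions M] = positions M.
  apply: lt_sorted_eq; last 1 first.
  - move=> z; have := mem_map (inv_inj (subKr k)) (positions M) (k - z).
    by rewrite subKr mem_rev => ->; rewrite -!toZ_positions -HM.
  - rewrite rev_sorted sorted_map; apply: sub_sorted (positions_sorted M) => x y /=.
    by rewrite ltrD2l ltrN2.
  - exact: positions_sorted.
have size_pos : size (positions M) = #|M| by rewrite size_image.
have size_refl : size [seq k - z | z <- positions M] = #|M| by rewrite size_map.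
rewrite -!(nth_image 0 (fun j : 'I_n => (j.+1 : nat)%:Z)) -/(positions M) -{2}E.
rewrite nth_rev size_refl ?ltn_ord //.
have -> : (#|M| - (rev_ord i).+1 = i)%N by rewrite /= subnSK // subKn // ltnW.
by rewrite (nth_map 0) // size_pos.
Qed.

End Positions.

(** * Counting equivalence classes *)

Lemma card_imset_eq_kernel (T U U' : finType) (F : T -> U) (G : T -> U') (D : {set T}) :
  {in D &, forall x y, (F x == F y) = (G x == G y)} -> #|F @: D| = #|G @: D|.
Proof.
move=> kerFG.
have -> : F @: D = fst @: [set (F x, G x) | x in D] by rewrite -imset_comp.
have -> : G @: D = snd @: [set (F x, G x) | x in D] by rewrite -imset_comp.
have inj_fst : {in [set (F x, G x) | x in D] &, injective fst}.
  move=> _ _ /imsetP [x Dx ->] /imsetP [y Dy ->] /= Exy.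
  by apply/eqP; rewrite xpair_eqE -kerFG // Exy eqxx.
have inj_snd : {in [set (F x, G x) | x in D] &, injective snd}.
  move=> _ _ /imsetP [x Dx ->] /imsetP [y Dy ->] /= Exy.
  by apply/eqP; rewrite xpair_eqE kerFG // Exy eqxx.
by rewrite (card_in_imset inj_fst) (card_in_imset inj_snd).
Qed.

Lemma eq_class (T : finType) (E : rel T) (D : {set T}) : equivalence_rel E ->
  {in D &, forall x y, ([set z in D | E x z] == [set z in D | E y z]) = E x y}.
Proof.
move=> eqE x y Dx Dy; apply/eqP/idP => [Exy | Exy].
  have : y \in [set z in D | E y z] by rewrite inE Dy (eqE y y y).1.
  by rewrite -Exy inE => /andP [].
by apply/setP => z; rewrite !inE (eqE x y z).2.
Qed.

Section EquivalencePartition.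
Variable T : finType.
Implicit Types (E : rel T) (D : {set T}).

Lemma card_equivalence_partition_transfer (T' : finType) E (E' : rel T') D
    (D' : {set T'}) (phi : T -> T') :
  equivalence_rel E -> equivalence_rel E' ->
  {in D, forall x, phi x \in D'} ->
  {in D &, forall x y, E' (phi x) (phi y) = E x y} ->
  {in D', forall y, exists2 x, x \in D & E' (phi x) y} ->
  #|equivalence_partition E D| = #|equivalence_partition E' D'|.
Proof.
move=> eqE eqE' phiD phiE phi_onto.
have -> : equivalence_partition E' D' = [set [set z in D' | E' (phi x) z] | x in D].
  apply/setP => K; apply/imsetP/imsetP => [[y Dy ->] | [x Dx ->]]; last first.
    by exists (phi x); rewrite ?phiD.
  have [x Dx Exy] := phi_onto y Dy; exists x => //; apply/eqP.
  by rewrite eq_sym eq_class ?phiD.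
by apply: card_imset_eq_kernel => x y Dx Dy; rewrite !eq_class ?phiD // phiE.
Qed.

Lemma card_equivalence_partition_fibers (P : finType) E D (pi : T -> P) (Ps : {set P}) :
  equivalence_rel E -> {in D, forall x, pi x \in Ps} ->
  {in D &, forall x y, E x y -> pi x = pi y} ->
  #|equivalence_partition E D| =
    (\sum_(p in Ps) #|equivalence_partition E [set x in D | pi x == p]|)%N.
Proof.
move=> eqE piD piE; have [-> | [x0 _]] := set_0Vmem D.
  rewrite /equivalence_partition imset0 cards0 big1 // => p _.
  rewrite (_ : [set x in set0 | _] = set0) ?imset0 ?cards0 //.
  by apply/setP => x; rewrite !inE.
have class_fiber x : x \in D ->
    [set y in [set z in D | pi z == pi x] | E x y] = [set y in D | E x y].
  move=> Dx; apply/setP => y; rewrite !inE -andbA; apply: andb_id2l => Dy.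
  by apply/andP/idP => [[_ ->] // | Exy]; rewrite (piE x y Dx Dy Exy) eqxx.
pose piK (K : {set T}) := pi (odflt x0 [pick x in K]).
have piK_class x : x \in D -> piK [set y in D | E x y] = pi x.
  rewrite /piK => Dx; case: pickP => [y | no_y] /=.
    by rewrite inE => /andP [Dy Exy]; rewrite (piE x y).
  by have := no_y x; rewrite inE Dx (eqE x x x).1.
rewrite -sum1_card (partition_big piK (mem Ps)) => [|K /imsetP [x Dx ->]]; last first.
  by rewrite piK_class //; apply: piD.
apply: eq_bigr => p _; rewrite sum1dep_card; apply: eq_card => K; rewrite inE.
apply/andP/imsetP => [[/imsetP [x Dx ->] /eqP <-] | [x /setIdP [Dx /eqP <-] ->]].
  by rewrite piK_class //; exists x; rewrite ?class_fiber // inE Dx eqxx.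
by rewrite class_fiber //; split; [exact: imset_f | rewrite piK_class].
Qed.

End EquivalencePartition.

(** * Rules with a prescribed set of essential arguments *)

Section Precomposition.
Variables (m n : nat) (p : 'I_m -> 'I_n).
Hypothesis p_inj : injective p.
Implicit Types (u : word m) (w : word n) (h : rule m) (f : rule n).

Definition extend u : word n := [ffun j => [exists i, (p i == j) && u i]].
Definition rule_restr f : rule m := [ffun u => f (extend u)].
Definition rule_lift h : rule n := [ffun w : word n => h [ffun i => w (p i)]].

Lemma extendE u i : extend u (p i) = u i.
Proof.
rewrite ffunE; apply/existsP/idP => [[i' /andP [/eqP /p_inj -> //]] | ui].
by exists i; rewrite eqxx.
Qed.

Lemma extendK u : [ffun i => extend u (p i)] = u.
Proof. by apply/ffunP => i; rewrite ffunE extendE. Qed.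

Lemma rule_liftK h : rule_restr (rule_lift h) = h.
Proof. by apply/ffunP => u; rewrite !ffunE extendK. Qed.

Lemma rule_restrK f : ess f \subset p @: setT -> rule_lift (rule_restr f) = f.
Proof.
move=> ess_f; apply/ffunP => w; rewrite !ffunE; apply: eq_on_ess => j /(subsetP ess_f).
by case/imsetP => i _ ->; rewrite extendE ffunE.
Qed.

Lemma ess_rule_lift h : ess (rule_lift h) = p @: ess h.
Proof.
apply/setP => j; rewrite inE; apply/existsP/imsetP => [[w] | [i /[!inE] /existsP [u Hu] ->]].
  rewrite !ffunE; have [i /eqP Eij | no_i] := pickP (fun i => p i == j).
    move=> Hw; exists i => //; rewrite inE; apply/existsP; exists [ffun i => w (p i)].
    suff <- : [ffun i0 => flip w j (p i0)] = flip [ffun i => w (p i)] i by [].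
    by apply/ffunP => i0; rewrite !ffunE -Eij (inj_eq p_inj).
  suff -> : [ffun i0 => flip w j (p i0)] = [ffun i0 => w (p i0)] by rewrite eqxx.
  by apply/ffunP => i0; rewrite !ffunE no_i.
exists (extend u); rewrite !ffunE extendK.
suff -> : [ffun i0 => flip (extend u) (p i) (p i0)] = flip u i by [].
by apply/ffunP => i0; rewrite !ffunE (inj_eq p_inj) -(extendE u i0) ffunE.
Qed.

End Precomposition.

Section RulesOnSubset.
Variables (n : nat) (M : {set 'I_n}).

Local Notation ev := (@enum_val _ (mem M)).

Lemma enum_val_imsetT : ev @: setT = M.
Proof.
apply/setP => j; apply/imsetP/idP => [[i _ ->] | Mj]; first exact: enum_valP.
by exists (enum_rank_in Mj j); rewrite ?enum_rankK_in.
Qed.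

Lemma ess_rule_lift_irreducible (h : rule #|M|) :
  irreducible h -> ess (rule_lift ev h) = M.
Proof.
rewrite irreducibleE => /eqP ess_h.
by rewrite ess_rule_lift ?ess_h ?enum_val_imsetT //; apply: enum_val_inj.
Qed.

Lemma irreducible_rule_restr (f : rule n) : ess f = M -> irreducible (rule_restr ev f).
Proof.
move=> ess_f; rewrite irreducibleE; apply/eqP/(imset_inj (@enum_val_inj _ (mem M))).
rewrite -ess_rule_lift ?rule_restrK ?ess_f ?enum_val_imsetT //; exact: enum_val_inj.
Qed.

End RulesOnSubset.

(** * The action of S_2 *)

Section S2Action.
Variable m : nat.
Implicit Types (f g h : rule m) (w : word m) (a : S2).

Lemma cwK : involutive (@cw m).
Proof. by move=> w; apply/ffunP => i; rewrite !ffunE negbK. Qed.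

Lemma rwK : involutive (@rw m).
Proof. by move=> w; apply/ffunP => i; rewrite !ffunE rev_ordK. Qed.

Lemma cw_rw w : cw (rw w) = rw (cw w).
Proof. by apply/ffunP => i; rewrite !ffunE. Qed.

Lemma chatK : involutive (@chat m).
Proof. by move=> f; apply/ffunP => w; rewrite !ffunE cwK negbK. Qed.

Lemma rhatK : involutive (@rhat m).
Proof. by move=> f; apply/ffunP => w; rewrite !ffunE rwK. Qed.

Lemma chat_rhat f : chat (rhat f) = rhat (chat f).
Proof. by apply/ffunP => w; rewrite !ffunE cw_rw. Qed.

Lemma actS2_comp a a' f :
  actS2 a (actS2 a' f) = actS2 (a.1 (+) a'.1, a.2 (+) a'.2) f.
Proof.
by case: a => [[] []]; case: a' => [[] []]; rewrite /actS2 /= ?chat_rhat ?chatK ?rhatK.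
Qed.

Lemma actS2K a : involutive (@actS2 m a).
Proof. by move=> f; rewrite actS2_comp !addbb. Qed.

Lemma irreducible_chat f : irreducible f -> irreducible (chat f).
Proof.
move=> /forallP irr_f; apply/forallP => i; have /existsP [w Hw] := irr_f i.
apply/existsP; exists (cw w); rewrite !ffunE cwK.
have -> : cw (flip (cw w) i) = flip w i.
  by apply/ffunP => j; rewrite !ffunE; case: (j == i); rewrite ?negbK.
by move: Hw; case: (f w); case: (f (flip w i)).
Qed.

Lemma irreducible_rhat f : irreducible f -> irreducible (rhat f).
Proof.
move=> /forallP irr_f; apply/forallP => i; have /existsP [w Hw] := irr_f (rev_ord i).
apply/existsP; exists (rw w); rewrite !ffunE rwK.
suff -> : rw (flip (rw w) i) = flip w (rev_ord i) by [].
by apply/ffunP => j; rewrite !ffunE rev_ordK (can2_eq rev_ordK rev_ordK).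
Qed.

Lemma irreducible_actS2 a f : irreducible f -> irreducible (actS2 a f).
Proof.
case: a => [[] []] irr_f; rewrite /actS2 /=;
  by repeat (apply: irreducible_rhat || apply: irreducible_chat).
Qed.

Lemma actS2E b c (F : rule m) u :
  actS2 (b, c) F u = c (+) F [ffun i => c (+) u (if b then rev_ord i else i)].
Proof.
suff -> : [ffun i => c (+) u (if b then rev_ord i else i)] =
          (if c then @cw m else id) (if b then rw u else u).
  by case: c; case: b; rewrite /actS2 /= ?ffunE.
by apply/ffunP => i; case: c; case: b; rewrite !ffunE.
Qed.

Lemma existsS2 (P : pred S2) :
  [exists a, P a] = [|| P (false, false), P (false, true), P (true, false) | P (true, true)].
Proof.
apply/existsP/idP => [[[[] []] Pa] | ]; rewrite ?Pa ?orbT //.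
by case/or4P => Pa; eexists; apply: Pa.
Qed.

(* [S2rel true] relates the rules of an S_2-orbit, [S2rel false] those of a
   <c>-orbit. *)
Definition S2rel (with_r : bool) : rel (rule m) :=
  fun h h' => [exists a : S2, (a.1 ==> with_r) && (h' == actS2 a h)].

Lemma S2rel_equiv with_r : equivalence_rel (S2rel with_r).
Proof.
move=> f g h; split; first by apply/existsP; exists (false, false); rewrite /= eqxx.
case/existsP => a /andP [Ha /eqP ->].
apply/existsP/existsP => -[b /andP [Hb /eqP ->]];
  exists (b.1 (+) a.1, b.2 (+) a.2); rewrite actS2_comp /= ?actS2K;
  rewrite -?addbA ?addbb ?addbF eqxx andbT;
  by move: Ha Hb; case: (b.1); case: (a.1).
Qed.

Lemma orbitS2_actS2 a f : orbitS2 (actS2 a f) = orbitS2 f.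
Proof.
apply/setP => g; rewrite !inE; apply/existsP/existsP => -[b /eqP ->].
  by exists (b.1 (+) a.1, b.2 (+) a.2); rewrite actS2_comp.
by exists (b.1 (+) a.1, b.2 (+) a.2); rewrite actS2_comp /= -!addbA !addbb !addbF.
Qed.

Lemma orbitS2_refl f : f \in orbitS2 f.
Proof. by rewrite inE; apply/existsP; exists (false, false). Qed.

Lemma eq_orbitS2 f g : (orbitS2 g == orbitS2 f) = (g \in orbitS2 f).
Proof.
apply/eqP/idP => [<- | ]; first exact: orbitS2_refl.
by rewrite inE => /existsP [a /eqP ->]; apply: orbitS2_actS2.
Qed.

Lemma mem_orbitS2 f g :
  (g \in orbitS2 f) = [|| g == f, g == chat f, g == rhat f | g == rhat (chat f)].
Proof. by rewrite inE existsS2. Qed.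

Lemma stab_actS2 a f : stab (actS2 a f) = stab f.
Proof.
apply/setP => b; rewrite !inE.
have -> : actS2 b (actS2 a f) = actS2 a (actS2 b f).
  by rewrite !actS2_comp addbC [b.2 (+) _]addbC.
by rewrite (can_eq (actS2K a)).
Qed.

Lemma eq_stab (U : {set S2}) f : (stab f == U) =
  [&& (false, false) \in U, (chat f == f) == ((false, true) \in U),
      (rhat f == f) == ((true, false) \in U) &
      (rhat (chat f) == f) == ((true, true) \in U)].
Proof.
apply/eqP/and4P => [<- | [U_1 U_c U_r U_rc]]; first by rewrite !inE /actS2 /= !eqxx.
apply/setP => -[[] []]; rewrite inE /actS2 /= ?eqxx ?U_1 //;
  by rewrite ?(eqP U_c) ?(eqP U_r) ?(eqP U_rc).
Qed.

End S2Action.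

Lemma sum_mem_subset (T : finType) (A B : {set T}) :
  B \subset A -> (\sum_(x in A) (x \in B))%N = #|B|.
Proof.
move=> sBA; rewrite -sum1_card big_mkcond [in RHS]big_mkcond /=.
apply: eq_bigr => x _; case: (boolP (x \in B)) => [/(subsetP sBA) -> // | _].
by case: (x \in A).
Qed.

Section S2Count.
Variable m : nat.
Implicit Types (f g h : rule m).
Local Notation Irr := [set f : rule m | irreducible f].

Lemma orbitS2_irreducible f g : irreducible f -> g \in orbitS2 f -> irreducible g.
Proof. by move=> irr_f; rewrite inE => /existsP [a /eqP ->]; apply: irreducible_actS2. Qed.

Lemma S2_class f : irreducible f -> [set g in Irr | S2rel true f g] = orbitS2 f.
Proof.
move=> irr_f; apply/setP => g; rewrite !inE.
apply/andP/existsP => [[_ /existsP [a /andP [_ Ha]]] | [a Ha]]; first by exists a.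
split; last by apply/existsP; exists a; rewrite implybT.
by apply: orbitS2_irreducible irr_f _; rewrite inE; apply/existsP; exists a.
Qed.

Lemma card_S2_classes : #|equivalence_partition (S2rel true) Irr| = num_Lbar_classes m.
Proof.
apply: eq_card => K; apply/imsetP/imsetP => -[f /[!inE] irr_f ->];
  by exists f; rewrite ?inE ?S2_class.
Qed.

Definition orbits_with_stab (U : {set S2}) : {set {set rule m}} :=
  [set orbitS2 f | f in [pred f : rule m | irreducible f && (stab f == U)]].

Lemma mem_orbits_with_stab U f :
  irreducible f -> (orbitS2 f \in orbits_with_stab U) = (stab f == U).
Proof.
move=> irr_f; apply/imsetP/idP => [[g /andP [_ /eqP <-] /eqP] | stab_f].
  by rewrite eq_orbitS2 inE => /existsP [a /eqP ->]; rewrite stab_actS2.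
by exists f => //; rewrite inE irr_f.
Qed.

Lemma c_class f g : g \in orbitS2 f ->
  [set h in orbitS2 f | S2rel false g h] = [set g; chat g].
Proof.
move=> orb_g; have orb_cg : chat g \in orbitS2 f.
  by rewrite -eq_orbitS2 -[chat g]/(actS2 (false, true) g) orbitS2_actS2 eq_orbitS2.
apply/setP => h; rewrite in_set2 inE /S2rel existsS2 /actS2 /= !orbF.
by apply: andb_idl => /orP [] /eqP ->.
Qed.

Lemma eq_c_classes f : ([set f; chat f] == [set rhat f; rhat (chat f)]) =
  (rhat f == f) || (rhat (chat f) == f).
Proof.
apply/eqP/idP => [E | /orP [] /eqP E].
- have : rhat f \in [set f; chat f] by rewrite E !inE eqxx.
  rewrite !inE => /orP [-> // | /eqP E'].
  by rewrite -chat_rhat E' chatK eqxx orbT.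
- by rewrite E -chat_rhat E.
- have -> : rhat f = chat f by rewrite -{1}E rhatK.
  by rewrite E setUC.
Qed.

Lemma card_c_classes_in_orbit f : irreducible f ->
  #|equivalence_partition (S2rel false) [set g in Irr | orbitS2 g == orbitS2 f]| =
    (1 + ((stab f == U1) + (stab f == Uc)))%N.
Proof.
move=> irr_f.
have -> : [set g in Irr | orbitS2 g == orbitS2 f] = orbitS2 f.
  apply/setP => g; rewrite inE [g \in Irr]inE eq_orbitS2; apply: andb_idl.
  exact: orbitS2_irreducible.
have -> : equivalence_partition (S2rel false) (orbitS2 f) =
          [set [set f; chat f]; [set rhat f; rhat (chat f)]].
  apply/setP => K; apply/imsetP/set2P => [[g orb_g ->] | [] ->].
  - rewrite c_class //; move: orb_g; rewrite mem_orbitS2 => /or4P [] /eqP ->.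
    + by left.
    + by left; rewrite chatK setUC.
    + by right; rewrite chat_rhat.
    + by right; rewrite chat_rhat chatK setUC.
  - by exists f; rewrite ?c_class ?orbitS2_refl.
  - have orb_rf : rhat f \in orbitS2 f by rewrite mem_orbitS2 eqxx !orbT.
    by exists (rhat f); rewrite ?c_class // chat_rhat.
rewrite cards2 eq_c_classes !eq_stab !inE /=.
by case: (chat f == f); case: (rhat f == f); case: (rhat (chat f) == f).
Qed.

Lemma card_c_classes :
  #|equivalence_partition (S2rel false) Irr| =
    (num_Lbar_classes m + (tbar U1 m + tbar Uc m))%N.
Proof.
pose orbits := [set orbitS2 f | f in [pred f : rule m | irreducible f]].
have sub_orbits U : orbits_with_stab U \subset orbits.
  by apply/subsetP => _ /imsetP [f /andP [irr_f _] ->]; apply: imset_f.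
rewrite (card_equivalence_partition_fibers (pi := @orbitS2 m) (Ps := orbits)).
- rewrite (eq_bigr (fun O =>
      1 + ((O \in orbits_with_stab U1) + (O \in orbits_with_stab Uc))))%N.
    by rewrite !big_split /= sum1_card !sum_mem_subset.
  move=> _ /imsetP [f irr_f ->].
  by rewrite card_c_classes_in_orbit // !mem_orbits_with_stab.
- exact: S2rel_equiv.
- by move=> f; rewrite inE => irr_f; apply: imset_f.
- by move=> f g _ _ /existsP [a /andP [_ /eqP ->]]; rewrite orbitS2_actS2.
Qed.

End S2Count.

Definition config_of n (p : 'I_n -> int) (w : word n) : config :=
  fun z => [exists j, (p j == z) && w j].

Lemma config_ofE n (p : 'I_n -> int) (p_inj : injective p) w j :
  config_of p w (p j) = w j.
Proof.
apply/existsP/idP => [[j' /andP [/eqP /p_inj -> //]] | wj].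
by exists j; rewrite eqxx.
Qed.

Definition rule_cong n (f g : rule n) : bool := `[< gcong (PhiN f) (PhiN g) >].

Lemma rule_cong_equiv n : equivalence_rel (@rule_cong n).
Proof. by move=> f g h; apply: gcong_equiv. Qed.

Section RulesWithSupport.
Variables (n : nat) (M : {set 'I_n}).
Local Notation ev := (@enum_val _ (mem M)).
Implicit Types (f g : rule n).

Lemma rule_restr_window f p a x :
  ess f = M -> f (window p a x) = rule_restr ev f [ffun i => a (+) x (p (ev i))].
Proof.
move=> ess_f; rewrite -{1}(rule_restrK (@enum_val_inj _ (mem M)) (f := f)).
  by rewrite ffunE; congr (rule_restr ev f _); apply/ffunP => i; rewrite !ffunE.
by rewrite ess_f enum_val_imsetT.
Qed.

Lemma cell_enum_val k b :
  (forall z, toZ M z = toZ M (if b then k - z else z - k)) ->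
  forall i, cell k b (ev i) = cell 0 false (ev (if b then rev_ord i else i)).
Proof.
case: b => HM i; rewrite /cell add0r; first exact: positions_reflect.
by rewrite (positions_translate HM (enum_valP i)) add0r.
Qed.

Lemma local_equiv_rule_restr k a b f g :
  (forall z, toZ M z = toZ M (if b then k - z else z - k)) -> ess f = M -> ess g = M ->
  local_equiv k a b f g <-> rule_restr ev g = actS2 (b, a) (rule_restr ev f).
Proof.
move=> HM ess_f ess_g.
pose u x : word #|M| := [ffun i => x (cell 0 false (ev i))].
have gE x : g (window (cell 0 false) false x) = rule_restr ev g (u x).
  by rewrite rule_restr_window.
have fE x : a (+) f (window (cell k b) a x) = actS2 (b, a) (rule_restr ev f) (u x).
  rewrite rule_restr_window // actS2E; congr (a (+) rule_restr ev f _).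
  by apply/ffunP => i; rewrite !ffunE (cell_enum_val HM).
have u_onto w : u (config_of (cell 0 false) (extend ev w)) = w.
  apply/ffunP => i; rewrite ffunE config_ofE ?extendE //.
  - exact: enum_val_inj.
  - exact: cell_inj.
split=> [Hfg | E x]; last by rewrite gE fE E.
by apply/ffunP => w; rewrite -(u_onto w) -gE Hfg fE.
Qed.

Lemma rule_cong_restr f g : ess f = M -> ess g = M ->
  rule_cong f g = S2rel `[< Sym M >] (rule_restr ev f) (rule_restr ev g).
Proof.
move=> ess_f ess_g; apply/asboolP/existsP => [/gcong_PhiN [k [a [b Hfg]]] | [[b a]]].
  have HM := local_equiv_ess Hfg; rewrite ess_f ess_g in HM.
  have /(local_equiv_rule_restr a HM ess_f ess_g) -> := Hfg.
  exists (b, a); rewrite eqxx andbT.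
  by case: b HM {Hfg} => //= HM; apply/asboolP; exists k.
move=> /andP [Hb /eqP E]; apply/gcong_PhiN.
have [k HM] : exists k, forall z, toZ M z = toZ M (if b then k - z else z - k).
  by case: b Hb {E} => /= [/asboolP [k HM] | _]; [exists k | exists 0 => z; rewrite subr0].
by exists k, a, b; apply/(local_equiv_rule_restr a HM ess_f ess_g).
Qed.

End RulesWithSupport.

Lemma rule_cong_scong n (f g : rule n) : rule_cong f g -> scong (ess f) (ess g).
Proof.
move=> /asboolP /gcong_PhiN [k [a [b /local_equiv_ess HM]]].
by exists k; case: b HM => HM; [right | left].
Qed.

Lemma rule_cong_ess_exists n (M : {set 'I_n}) (g : rule n) :
  scong M (ess g) -> exists2 f, ess f = M & rule_cong f g.
Proof.
case=> k HMg.
have [b {}HMg] : exists b, forall z, toZ (ess g) z = toZ M (if b then k - z else z - k).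
  by case: HMg => HMg; [exists false | exists true].
pose f : rule n := [ffun w => g (window (cell 0 false) false (config_of (cell k b) w))].
have Hfg : local_equiv k false b f g.
  move=> x; rewrite ffunE; apply: eq_on_ess => i ess_i; rewrite !ffunE.
  have /toZ_cell [j <- Mj] : toZ M (if b then k - cell 0 false i else cell 0 false i - k).
    by rewrite -HMg /cell add0r toZ_pos.
  by rewrite config_ofE ?ffunE //; exact: cell_inj.
exists f; last by apply/asboolP/gcong_PhiN; exists k, false, b.
apply: toZ_inj => y; have := local_equiv_ess Hfg (if b then k - y else y + k).
rewrite HMg; have -> : (if b then k - (if b then k - y else y + k)
                        else (if b then k - y else y + k) - k) = y.
  by case: (b); rewrite ?subKr ?addrK.
by move=> <-.
Qed.

Section Classes.
Variable n : nat.

Definition sclass (M : {set 'I_n}) : {set {set 'I_n}} := [set M' | `[< scong M M' >]].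

Lemma eq_sclass (M M' : {set 'I_n}) : scong M M' -> sclass M = sclass M'.
Proof.
by move=> /asboolP HM; apply/setP => M''; rewrite !inE; apply: (scong_equiv _ _ _).2.
Qed.

Lemma sclass_rep C : C \in Pclasses n -> C = sclass (rep C).
Proof.
case/imsetP => M _ ->; apply: eq_sclass; rewrite /rep; case: pickP => [M' | none].
  by rewrite inE => /asboolP.
by have := none M; rewrite inE (scong_equiv M M M).1.
Qed.

Lemma num_G2_classesE :
  num_G2_classes n = #|equivalence_partition (@rule_cong n) [set: rule n]|.
Proof.
apply: eq_card => K; apply/imsetP/imsetP => -[f _ ->];
  by exists f => //; apply/setP => g; rewrite !inE.
Qed.

Lemma card_rule_classes_sclass (M : {set 'I_n}) :
  #|equivalence_partition (@rule_cong n) [set f | sclass (ess f) == sclass M]| =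
  #|equivalence_partition (S2rel `[< Sym M >]) [set h : rule #|M| | irreducible h]|.
Proof.
have ev_inj := @enum_val_inj _ (mem M).
transitivity #|equivalence_partition (@rule_cong n) [set f | ess f == M]|.
  apply/esym/(card_equivalence_partition_transfer (phi := id));
    do ?[exact: rule_cong_equiv] => //.
  - by move=> f; rewrite !inE => /eqP ->.
  - move=> g; rewrite inE => /eqP eq_g.
    have : M \in sclass (ess g) by rewrite eq_g inE (scong_equiv M M M).1.
    rewrite inE => /asboolP /scong_sym /rule_cong_ess_exists [f ess_f].
    by exists f; rewrite ?inE ?ess_f.
apply: (card_equivalence_partition_transfer (phi := rule_restr enum_val)).
- exact: rule_cong_equiv.
- exact: S2rel_equiv.
- by move=> f; rewrite !inE => /eqP /irreducible_rule_restr.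
- move=> f g; rewrite !inE => /eqP ess_f /eqP ess_g.
  by rewrite (rule_cong_restr ess_f ess_g).
- move=> h; rewrite inE => irr_h; exists (rule_lift enum_val h).
    by rewrite inE ess_rule_lift_irreducible.
  by rewrite rule_liftK // (S2rel_equiv _ h h h).1.
Qed.

End Classes.

Local Close Scope ring_scope.

Theorem proposition9 (n : nat) :
  num_G2_classes n =
    (\sum_(C in Pclasses n) num_Lbar_classes #|rep C|
     + \sum_(C in Pclasses n | ~~ `[< Sym (rep C) >])
         (tbar U1 #|rep C| + tbar Uc #|rep C|))%N.
Proof.
rewrite num_G2_classesE (card_equivalence_partition_fibers (pi := fun f => sclass (ess f))
                                                         (Ps := Pclasses n)).
- rewrite big_mkcondr -big_split /=; apply: eq_bigr => C PC.
  rewrite setIdE setTI {1}(sclass_rep PC) card_rule_classes_sclass.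
  by case: `[< Sym (rep C) >]; rewrite (card_S2_classes, card_c_classes) ?addn0.
- exact: rule_cong_equiv.
- by move=> f _; apply: imset_f.
- by move=> f g _ _ /rule_cong_scong; apply: eq_sclass.
Qed.
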